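(* Let $\mathcal C$ be a category with binary coproducts and $H\colon\mathcal C\to\mathcal C$ a cia functor. Then for every object $Y$ of $\mathcal C$ the functor $H(-)+Y$ is also a cia functor.
   Context: An algebra $a\colon GA\to A$ for an endofunctor $G$ is corecursive if for every coalgebra $e\colon X\to GX$ there is a unique $s\colon X\to A$ with $s=a\cdot Gs\cdot e$; it is a cia if for every $e\colon X\to GX+A$ there is a unique $s\colon X\to A$ with $s=[a,\mathrm{id}_A]\cdot(Gs+\mathrm{id}_A)\cdot e$. An endofunctor is a cia functor if every corecursive algebra for it is a cia. *)

Record Category : Type := {
  Ob :> Type;
  Hom : Ob -> Ob -> Type;
  idm : forall A : Ob, Hom A A;
  comp : forall A B E : Ob, Hom B E -> Hom A B -> Hom A E;
  comp_id_l : forall (A B : Ob) (f : Hom A B), comp A B B (idm B) f = f;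
  comp_id_r : forall (A B : Ob) (f : Hom A B), comp A A B f (idm A) = f;
  comp_assoc : forall (A B E D : Ob) (f : Hom E D) (g : Hom B E) (h : Hom A B),
      comp A E D f (comp A B E g h) = comp A B D (comp B E D f g) h
}.
Arguments Hom {c} _ _.
Arguments idm {c} _.
Arguments comp {c A B E} _ _.

Notation "g ∘ f" := (comp g f) (at level 40, left associativity).

Record BinCoproducts (C : Category) : Type := {
  coprod : C -> C -> C;
  cinl : forall A B : C, Hom A (coprod A B);
  cinr : forall A B : C, Hom B (coprod A B);
  copair : forall {A B Z : C}, Hom A Z -> Hom B Z -> Hom (coprod A B) Z;
  copair_inl : forall (A B Z : C) (f : Hom A Z) (g : Hom B Z),
      copair f g ∘ cinl A B = f;
  copair_inr : forall (A B Z : C) (f : Hom A Z) (g : Hom B Z),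
      copair f g ∘ cinr A B = g;
  copair_unique : forall (A B Z : C) (f : Hom A Z) (g : Hom B Z)
      (h : Hom (coprod A B) Z),
      h ∘ cinl A B = f -> h ∘ cinr A B = g -> h = copair f g
}.
Arguments coprod {C} _ _ _.
Arguments cinl {C} _ _ _.
Arguments cinr {C} _ _ _.
Arguments copair {C} _ {A B Z} _ _.

Definition cmap {C : Category} (CP : BinCoproducts C) {A B A' B' : C}
  (f : Hom A A') (g : Hom B B') : Hom (coprod CP A B) (coprod CP A' B') :=
  copair CP (cinl CP A' B' ∘ f) (cinr CP A' B' ∘ g).

Record Functor (C D : Category) : Type := {
  fobj :> C -> D;
  fmap : forall {A B : C}, Hom A B -> Hom (fobj A) (fobj B);
  fmap_id : forall A : C, fmap (idm A) = idm (fobj A);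
  fmap_comp : forall (A B E : C) (f : Hom A B) (g : Hom B E),
      fmap (g ∘ f) = fmap g ∘ fmap f
}.
Arguments fobj {C D} _ _.
Arguments fmap {C D} _ {A B} _.

Definition corecursive {C : Category} (G : Functor C C) (A : C)
  (a : Hom (G A) A) : Prop :=
  forall (X : C) (e : Hom X (G X)),
    exists! s : Hom X A, s = a ∘ fmap G s ∘ e.

Definition cia {C : Category} (CP : BinCoproducts C) (G : Functor C C) (A : C)
  (a : Hom (G A) A) : Prop :=
  forall (X : C) (e : Hom X (coprod CP (G X) A)),
    exists! s : Hom X A,
      s = copair CP a (idm A) ∘ cmap CP (fmap G s) (idm A) ∘ e.

Definition cia_functor {C : Category} (CP : BinCoproducts C) (G : Functor C C)
  : Prop :=
  forall (A : C) (a : Hom (G A) A), corecursive G A a -> cia CP G A a.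

Lemma cmap_id {C : Category} (CP : BinCoproducts C) (A B : C) :
  cmap CP (idm A) (idm B) = idm (coprod CP A B).
Proof.
  unfold cmap. symmetry. apply copair_unique.
  - rewrite comp_id_l, comp_id_r. reflexivity.
  - rewrite comp_id_l, comp_id_r. reflexivity.
Qed.

Lemma cmap_comp {C : Category} (CP : BinCoproducts C) (A B A' B' A'' B'' : C)
  (f : Hom A A') (g : Hom B B') (f' : Hom A' A'') (g' : Hom B' B'') :
  cmap CP (f' ∘ f) (g' ∘ g) = cmap CP f' g' ∘ cmap CP f g.
Proof.
  unfold cmap. symmetry. apply copair_unique.
  - rewrite <- comp_assoc, copair_inl, comp_assoc, copair_inl, comp_assoc.
    reflexivity.
  - rewrite <- comp_assoc, copair_inr, comp_assoc, copair_inr, comp_assoc.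
    reflexivity.
Qed.

Definition plusY {C : Category} (CP : BinCoproducts C) (H : Functor C C) (Y : C)
  : Functor C C.
Proof.
  refine {| fobj := fun X => coprod CP (H X) Y;
            fmap := fun A B f => cmap CP (fmap H f) (idm Y) |}.
  - intros A. rewrite fmap_id. apply cmap_id.
  - intros A B E f g. rewrite fmap_comp, <- cmap_comp, comp_id_l. reflexivity.
Defined.

(* An algebra a : HA + Y -> A splits as [α, β] with α : HA -> A and β : Y -> A.
   Precomposing a coalgebra e : X -> HX with inl turns it into a coalgebra for
   H(-) + Y with the same solutions, so α is corecursive whenever a is, and
   hence a cia because H is a cia functor.  Conversely, a flat equation
   e : X -> (HX + Y) + A for a becomes a flat equation for α once the Y-summand
   is sent into A along β, and this rewiring leaves the solution equation
   unchanged; so a is a cia as well. *)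


Section Coproducts.
Context {C : Category} (CP : BinCoproducts C).

Lemma coprod_hom_ext {A B Z : C} (h k : Hom (coprod CP A B) Z) :
  h ∘ cinl CP A B = k ∘ cinl CP A B -> h ∘ cinr CP A B = k ∘ cinr CP A B -> h = k.
Proof.
  intros Hl Hr.
  rewrite (copair_unique _ CP _ _ _ _ _ h eq_refl eq_refl), Hl, Hr.
  symmetry. apply copair_unique; reflexivity.
Qed.

Lemma copair_inl_comp {A B Z W : C} (f : Hom A Z) (g : Hom B Z) (x : Hom W A) :
  copair CP f g ∘ (cinl CP A B ∘ x) = f ∘ x.
Proof. rewrite comp_assoc, copair_inl. reflexivity. Qed.

Lemma copair_inr_comp {A B Z W : C} (f : Hom A Z) (g : Hom B Z) (x : Hom W B) :
  copair CP f g ∘ (cinr CP A B ∘ x) = g ∘ x.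
Proof. rewrite comp_assoc, copair_inr. reflexivity. Qed.

End Coproducts.

Ltac coprod_simpl :=
  unfold cmap; repeat (progress (rewrite ?comp_id_l, ?comp_id_r,
    ?copair_inl, ?copair_inr, ?copair_inl_comp, ?copair_inr_comp)
    || rewrite <- comp_assoc).

Lemma unique_fixpoint_ext {T : Type} (F G : T -> T) :
  (forall t, F t = G t) ->
  (exists! t, t = F t) -> exists! t, t = G t.
Proof.
  intros FG [s [Hs Hu]]. exists s. split.
  - rewrite <- FG. exact Hs.
  - intros t Ht. apply Hu. rewrite FG. exact Ht.
Qed.

Section PlusParameter.
Context {C : Category} (CP : BinCoproducts C) (H : Functor C C) (Y : C).

Lemma corecursive_copair_inl (A : C) (a : Hom (coprod CP (H A) Y) A) :
  corecursive (plusY CP H Y) A a -> corecursive H A (a ∘ cinl CP (H A) Y).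
Proof.
  intros Hcor X e.
  apply (unique_fixpoint_ext (fun s => a ∘ fmap (plusY CP H Y) s ∘ (cinl CP (H X) Y ∘ e))).
  - intros s. simpl. coprod_simpl. reflexivity.
  - apply Hcor.
Qed.

Definition absorb_parameter {B A : C} (b : Hom Y A) :
  Hom (coprod CP (coprod CP B Y) A) (coprod CP B A) :=
  copair CP (cmap CP (idm B) b) (cinr CP B A).

Lemma cia_step_absorb_parameter (A X : C) (a : Hom (coprod CP (H A) Y) A)
  (s : Hom X A) :
  copair CP a (idm A) ∘ cmap CP (fmap (plusY CP H Y) s) (idm A) =
  copair CP (a ∘ cinl CP (H A) Y) (idm A) ∘ cmap CP (fmap H s) (idm A)
    ∘ absorb_parameter (a ∘ cinr CP (H A) Y).
Proof.
  simpl. unfold absorb_parameter.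
  apply coprod_hom_ext; [apply coprod_hom_ext|]; coprod_simpl; reflexivity.
Qed.

Lemma cia_plusY_of_cia_copair_inl (A : C) (a : Hom (coprod CP (H A) Y) A) :
  cia CP H A (a ∘ cinl CP (H A) Y) -> cia CP (plusY CP H Y) A a.
Proof.
  intros Hcia X e.
  apply (unique_fixpoint_ext (fun s => copair CP (a ∘ cinl CP (H A) Y) (idm A)
           ∘ cmap CP (fmap H s) (idm A)
           ∘ (absorb_parameter (a ∘ cinr CP (H A) Y) ∘ e))).
  - intros s. rewrite cia_step_absorb_parameter, <- !comp_assoc. reflexivity.
  - apply Hcia.
Qed.

End PlusParameter.

Theorem mainTheorem5 (C : Category) (CP : BinCoproducts C) (H : Functor C C) :
  cia_functor CP H -> forall Y : C, cia_functor CP (plusY CP H Y).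
Proof.
  intros Hcia Y A a Hcor.
  apply cia_plusY_of_cia_copair_inl, Hcia, corecursive_copair_inl, Hcor.
Qed.
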